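(* Let $p: E \to B$ be a weak homology fibration of simplicial sets and let $f: B' \to B$ be a fibration. Then the pull-back $p': E' = B' \times_B E \to B'$ of $p$ along $f$ is again a weak homology fibration.
   Context: Spaces are simplicial sets. For a map $p: E \to B$ and an $n$-simplex $\sigma: \Delta[n] \to B$, $dp(\sigma)$ denotes the pull-back of $\Delta[n] \xrightarrow{\sigma} B \xleftarrow{p} E$ (the ''preimage'' of $\sigma$). A map $p: E \to B$ is a weak homology fibration if for every simplex $\sigma$ of $B$ and every simplicial operation $\theta$ (so that $\theta\sigma = \sigma\circ\theta$), the natural map between $dp(\theta\sigma)$ and $dp(\sigma)$ induces an isomorphism in integral homology. Homology means integral homology. *)

From HB Require Import structures.
From mathcomp Require Import all_boot all_order all_algebra.
From Stdlib Require Import ClassicalEpsilon ProofIrrelevance.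
Set Implicit Arguments. Unset Strict Implicit. Unset Printing Implicit Defensive.
Import GRing.Theory.

Definition monob m n (f : 'I_m.+1 -> 'I_n.+1) : bool :=
  [forall i : 'I_m.+1, forall j : 'I_m.+1, (i <= j) ==> (f i <= f j)].

Definition Mono m n := {f : {ffun 'I_m.+1 -> 'I_n.+1} | monob f}.
Definition mfun m n (a : Mono m n) : 'I_m.+1 -> 'I_n.+1 := fun i => sval a i.

Lemma monoP m n (f : 'I_m.+1 -> 'I_n.+1) :
  monob f -> forall i j : 'I_m.+1, i <= j -> f i <= f j.
Proof. by move=> /forallP H i j le; move: (H i) => /forallP /(_ j) /implyP; apply. Qed.

Lemma monob_ffun m n (f : 'I_m.+1 -> 'I_n.+1) :
  (forall i j : 'I_m.+1, i <= j -> f i <= f j) -> monob [ffun i => f i].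
Proof. move=> H; apply/forallP=> i; apply/forallP=> j; apply/implyP=> le; rewrite !ffunE; exact: H. Qed.

Definition mid n : Mono n n := exist _ [ffun i => i] (monob_ffun (fun i j (h : i <= j) => h)).

Lemma mcomp_mono k m n (a : Mono m n) (b : Mono k m) :
  forall i j : 'I_k.+1, i <= j -> mfun a (mfun b i) <= mfun a (mfun b j).
Proof.
move=> i j le; rewrite /mfun; apply: (monoP (valP a)); exact: (monoP (valP b)).
Qed.

Definition mcomp k m n (a : Mono m n) (b : Mono k m) : Mono k n :=
  exist _ [ffun i => mfun a (mfun b i)] (monob_ffun (@mcomp_mono k m n a b)).

Lemma mcompE k m n (a : Mono m n) (b : Mono k m) i :
  mfun (mcomp a b) i = mfun a (mfun b i).
Proof. by rewrite /mfun /= ffunE. Qed.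

Lemma mono_ext m n (a b : Mono m n) : (forall i, mfun a i = mfun b i) -> a = b.
Proof. by move=> H; apply: val_inj; apply/ffunP. Qed.

Lemma mcompA j k m n (a : Mono m n) (b : Mono k m) (c : Mono j k) :
  mcomp a (mcomp b c) = mcomp (mcomp a b) c.
Proof. by apply: mono_ext=> i; rewrite !mcompE. Qed.

Lemma mcomp1 m n (a : Mono m n) : mcomp a (mid m) = a.
Proof. by apply: mono_ext=> i; rewrite mcompE /mfun /= ffunE. Qed.

Record sSet := SSet {
  obj :> nat -> Type;
  act : forall m n, Mono m n -> obj n -> obj m;
  act_id : forall n x, act (mid n) x = x;
  act_comp : forall k m n (a : Mono m n) (b : Mono k m) x,
      act (mcomp a b) x = act b (act a x) }.
Arguments act {s m n}.

Record sMap (X Y : sSet) := SMap {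
  smap : forall {n}, X n -> Y n;
  smap_nat : forall m n (a : Mono m n) x, smap (act a x) = act a (smap x) }.
Arguments smap {X Y} s {n}.

Lemma simplex_comp n k m j (a : Mono m j) (b : Mono k m) (x : Mono j n) :
  mcomp x (mcomp a b) = mcomp (mcomp x a) b.
Proof. exact: mcompA. Qed.

Definition Simplex (n : nat) : sSet :=
  @SSet (fun m => Mono m n) (fun m k a x => mcomp x a)
        (fun k x => mcomp1 x) (@simplex_comp n).

Definition hornb n (k : 'I_n.+1) m (a : Mono m n) : bool :=
  [exists j : 'I_n.+1, (j != k) && [forall i : 'I_m.+1, mfun a i != j]].

Lemma hornb_comp n (k : 'I_n.+1) m j (a : Mono j n) (b : Mono m j) :
  hornb k a -> hornb k (mcomp a b).
Proof.
move=> /existsP [l /andP [lk /forallP H]]; apply/existsP; exists l.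
by rewrite lk /=; apply/forallP=> i; rewrite /mfun /= ffunE; apply: H.
Qed.

Definition horn_act n (k : 'I_n.+1) m j (a : Mono m j)
  (x : {b : Mono j n | hornb k b}) : {b : Mono m n | hornb k b} :=
  exist _ (mcomp (sval x) a) (hornb_comp a (valP x)).

Lemma horn_id n (k : 'I_n.+1) j (x : {b : Mono j n | hornb k b}) :
  @horn_act n k j j (mid j) x = x.
Proof. by apply: val_inj; rewrite /= mcomp1. Qed.

Lemma horn_comp n (k : 'I_n.+1) i m j (a : Mono m j) (b : Mono i m)
  (x : {b : Mono j n | hornb k b}) :
  horn_act (mcomp a b) x = horn_act b (horn_act a x).
Proof. by apply: val_inj; rewrite /= mcompA. Qed.

Definition Horn n (k : 'I_n.+1) : sSet :=
  @SSet (fun m => {b : Mono m n | hornb k b}) (@horn_act n k)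
        (@horn_id n k) (@horn_comp n k).

Definition horn_incl n (k : 'I_n.+1) : sMap (Horn k) (Simplex n) :=
  @SMap (Horn k) (Simplex n) (fun m x => sval x) (fun m j a x => erefl).

Definition kan_fibration (X Y : sSet) (f : sMap X Y) : Prop :=
  forall (n : nat) (k : 'I_n.+1), 0 < n ->
  forall (u : sMap (Horn k) X) (v : sMap (Simplex n) Y),
    (forall m (x : Horn k m), smap f (smap u x) = smap v (smap (@horn_incl n k) x)) ->
    exists w : sMap (Simplex n) X,
      (forall m (x : Horn k m), smap w (smap (@horn_incl n k) x) = smap u x) /\
      (forall m (x : Simplex n m), smap f (smap w x) = smap v x).

Lemma sig_eq T (P : T -> Prop) (x y : sig P) : sval x = sval y -> x = y.
Proof. case: x y => [x hx] [y hy] /= e; subst y; f_equal; exact: proof_irrelevance. Qed.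

Section Pullback.
Variables (A E B : sSet) (f : sMap A B) (p : sMap E B).

Definition pb_obj m := {x : A m * E m | smap f x.1 = smap p x.2}.

Lemma pb_act_proof m n (a : Mono m n) (x : pb_obj n) :
  smap f (act a (sval x).1) = smap p (act a (sval x).2).
Proof. by rewrite !smap_nat (proj2_sig x). Qed.

Definition pb_act m n (a : Mono m n) (x : pb_obj n) : pb_obj m :=
  exist _ (act a (sval x).1, act a (sval x).2) (pb_act_proof a x).

Lemma pb_id n (x : pb_obj n) : pb_act (mid n) x = x.
Proof. by apply: sig_eq; rewrite /= !act_id; case: (sval x). Qed.

Lemma pb_comp k m n (a : Mono m n) (b : Mono k m) (x : pb_obj n) :
  pb_act (mcomp a b) x = pb_act b (pb_act a x).
Proof. by apply: sig_eq; rewrite /= !act_comp. Qed.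

Definition pullback : sSet := @SSet pb_obj pb_act pb_id pb_comp.

(* its projection onto A, i.e. the pull-back of p along f *)
Definition pb_fst : sMap pullback A :=
  @SMap pullback A (fun n x => (sval x).1) (fun m n a x => erefl).
End Pullback.

Definition yon (B : sSet) n (s : B n) : sMap (Simplex n) B :=
  @SMap (Simplex n) B (fun m a => act a s)
        (fun m k a x => act_comp x a s).

Definition dp (E B : sSet) (p : sMap E B) n (s : B n) : sSet :=
  pullback (yon s) p.

Section DpMap.
Variables (E B : sSet) (p : sMap E B) (n m : nat) (s : B n) (t : Mono m n).

Lemma dp_map_proof k (x : dp p (act t s) k) :
  smap (yon s) (mcomp t (sval x).1) = smap p (sval x).2.
Proof. by rewrite /= act_comp; exact: (proj2_sig x). Qed.

Definition dp_map_fun k (x : dp p (act t s) k) : dp p s k :=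
  exist _ (mcomp t (sval x).1, (sval x).2) (dp_map_proof x).

Lemma dp_map_nat k l (a : Mono k l) (x : dp p (act t s) l) :
  dp_map_fun (act a x) = act a (dp_map_fun x).
Proof. by apply: sig_eq; rewrite /= mcompA. Qed.

Definition dp_map : sMap (dp p (act t s)) (dp p s) :=
  @SMap (dp p (act t s)) (dp p s) dp_map_fun dp_map_nat.
End DpMap.

Local Open Scope ring_scope.

(* integral n-chains: finite formal Z-linear combinations of n-simplices *)
Definition chain (X : sSet) n := seq (int * X n).

Definition coef (X : sSet) n (c : chain X n) (y : X n) : int :=
  \sum_(q <- c) (if excluded_middle_informative (q.2 = y) then q.1 else 0).

Lemma face_mono n (i : 'I_n.+2) :
  forall j k : 'I_n.+1, (j <= k)%N -> (lift i j <= lift i k)%N.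
Proof. by move=> j k le; rewrite /= leq_bump2. Qed.

Definition face n (i : 'I_n.+2) : Mono n n.+1 :=
  exist _ [ffun j => lift i j] (monob_ffun (@face_mono n i)).

Definition bd (X : sSet) n (c : chain X n.+1) : chain X n :=
  flatten [seq [seq (((-1) ^+ (nat_of_ord i) * q.1)%R, act (face i) q.2)
                | i : 'I_n.+2 <- enum 'I_n.+2]
          | q : int * X n.+1 <- c].

Definition push (X Y : sSet) (g : sMap X Y) n (c : chain X n) : chain Y n :=
  [seq (q.1, smap g q.2) | q <- c].

Definition csub (X : sSet) n (c d : chain X n) : chain X n :=
  c ++ [seq (- q.1, q.2) | q <- d].

Definition is_cycle (X : sSet) n : chain X n -> Prop :=
  match n return chain X n -> Prop with
  | 0 => fun _ => True
  | k.+1 => fun c => forall y, coef (bd c) y = 0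
  end.

Definition is_bdry (X : sSet) n (c : chain X n) : Prop :=
  exists t : chain X n.+1, forall y, coef (bd t) y = coef c y.

(* g induces an isomorphism H_n(X;Z) -> H_n(Y;Z) for every n
   (surjectivity and injectivity on homology classes) *)
Definition homology_iso (X Y : sSet) (g : sMap X Y) : Prop :=
  forall n : nat,
    (forall z : chain Y n, is_cycle z ->
       exists z' : chain X n, is_cycle z' /\ is_bdry (csub z (push g z'))) /\
    (forall z' : chain X n, is_cycle z' -> is_bdry (push g z') -> is_bdry z').

Definition weak_homology_fibration (E B : sSet) (p : sMap E B) : Prop :=
  forall (n : nat) (s : B n) (m : nat) (t : Mono m n),
    homology_iso (dp_map p s t).

(* The preimage of a simplex s of B' under the pulled-back map B' x_B E -> B'
   is Delta[n] x_B' (B' x_B E), which is canonically isomorphic to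
   Delta[n] x_B E, the preimage of f s under p.  These isomorphisms commute
   with the comparison maps dp(theta s) -> dp(s). *)
From mathcomp Require Import all_boot all_order all_algebra.
From Stdlib Require Import ClassicalEpsilon.
Set Implicit Arguments. Unset Strict Implicit. Unset Printing Implicit Defensive.

Record sIso (X Y : sSet) := SIso {
  iso_map :> sMap X Y;
  iso_inv : sMap Y X;
  iso_mapK : forall n (x : X n), smap iso_inv (smap iso_map x) = x;
  iso_invK : forall n (y : Y n), smap iso_map (smap iso_inv y) = y }.

Definition sIso_sym (X Y : sSet) (i : sIso X Y) : sIso Y X :=
  SIso (iso_invK i) (iso_mapK i).

Section PushChains.
Variables (X Y : sSet).

Lemma push_bd (g : sMap X Y) n (c : chain X n.+1) :
  push g (bd c) = bd (push g c).
Proof.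
rewrite /bd /push map_flatten -!map_comp; congr flatten; apply: eq_map => q /=.
by rewrite -map_comp; apply: eq_map => i /=; rewrite smap_nat.
Qed.

Lemma push_csub (g : sMap X Y) n (c d : chain X n) :
  push g (csub c d) = csub (push g c) (push g d).
Proof. by rewrite /csub /push map_cat -!map_comp. Qed.

Variable i : sIso X Y.

Lemma push_isoK n (c : chain X n) : push (iso_inv i) (push i c) = c.
Proof.
by rewrite /push -map_comp -[RHS]map_id; apply: eq_map => -[a x] /=; rewrite iso_mapK.
Qed.

Lemma coef_push_iso n (c : chain X n) (y : Y n) :
  coef (push i c) y = coef c (smap (iso_inv i) y).
Proof.
rewrite /coef /push big_map; apply: eq_bigr => q _ /=.
case: excluded_middle_informative => e1; case: excluded_middle_informative => e2 //.
- by case: e2; rewrite -e1 iso_mapK.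
- by case: e1; rewrite e2 iso_invK.
Qed.

Lemma is_cycle_push_iso n (c : chain X n) : is_cycle c -> is_cycle (push i c).
Proof. by case: n c => [|n] c //= Hc y; rewrite -push_bd coef_push_iso Hc. Qed.

Lemma is_bdry_push_iso n (c : chain X n) : is_bdry c -> is_bdry (push i c).
Proof. by move=> [t Ht]; exists (push i t) => y; rewrite -push_bd !coef_push_iso Ht. Qed.

End PushChains.

Lemma push_comp (X Y Z : sSet) (g : sMap Y Z) (h : sMap X Y) n (c : chain X n) :
  push g (push h c) = [seq (q.1, smap g (smap h q.2)) | q <- c].
Proof. by rewrite /push -map_comp. Qed.

Lemma homology_iso_transfer (X' Y' X Y : sSet) (g : sMap X' Y') (h : sMap X Y)
    (a : sIso X' X) (b : sIso Y' Y) :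
  (forall n (x : X' n), smap h (smap a x) = smap b (smap g x)) ->
  homology_iso h -> homology_iso g.
Proof.
move=> hag Hh n; have [Hsurj Hinj] := Hh n.
have push_hag (c : chain X' n) : push h (push a c) = push b (push g c).
  by rewrite !push_comp; apply: eq_map => q; rewrite hag.
split.
- move=> z zc; have [w [wc zw]] := Hsurj _ (is_cycle_push_iso b zc).
  exists (push (iso_inv a) w); split; first exact: (is_cycle_push_iso (sIso_sym a)).
  have := is_bdry_push_iso (sIso_sym b) zw.
  by rewrite /= push_csub push_isoK -{1}(push_isoK (sIso_sym a) w) push_hag push_isoK.
- move=> z zc gz.
  have := Hinj _ (is_cycle_push_iso a zc).
  rewrite push_hag => /(_ (is_bdry_push_iso b gz)) /(is_bdry_push_iso (sIso_sym a)).
  by rewrite /= push_isoK.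
Qed.

Section BaseChange.
Variables (E B B' : sSet) (p : sMap E B) (f : sMap B' B).
Let p' := pb_fst f p.

Section DpIso.
Variables (n : nat) (s : B' n) (u : B n).
Hypothesis fs : smap f s = u.

Lemma dp_base_change_proof k (x : dp p' s k) :
  smap (yon u) (sval x).1 = smap p (sval (sval x).2).2.
Proof.
case: x => [[a [[b e] be]] /= ab]; rewrite /= in ab.
by rewrite -fs -smap_nat ab.
Qed.

Definition dp_base_change_fun k (x : dp p' s k) : dp p u k :=
  exist _ ((sval x).1, (sval (sval x).2).2) (dp_base_change_proof x).

Lemma dp_base_change_inv_proof k (y : dp p u k) :
  smap f (act (sval y).1 s) = smap p (sval y).2.
Proof. by rewrite smap_nat fs; exact: (proj2_sig y). Qed.

Definition dp_base_change_inv_fun k (y : dp p u k) : dp p' s k :=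
  exist _ ((sval y).1,
           exist _ (act (sval y).1 s, (sval y).2) (dp_base_change_inv_proof y)
             : pullback f p k) erefl.

Lemma dp_base_change_nat k l (a : Mono k l) (x : dp p' s l) :
  dp_base_change_fun (act a x) = act a (dp_base_change_fun x).
Proof. exact: sig_eq. Qed.

Lemma dp_base_change_inv_nat k l (a : Mono k l) (y : dp p u l) :
  dp_base_change_inv_fun (act a y) = act a (dp_base_change_inv_fun y).
Proof. by apply: sig_eq => /=; congr pair; apply: sig_eq; rewrite /= act_comp. Qed.

Lemma dp_base_change_funK k (x : dp p' s k) :
  dp_base_change_inv_fun (dp_base_change_fun x) = x.
Proof.
case: x => [[a [[b e] be]] ab]; apply: sig_eq => /=; congr pair.
by apply: sig_eq; rewrite /= [act a s]ab.
Qed.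

Lemma dp_base_change_inv_funK k (y : dp p u k) :
  dp_base_change_fun (dp_base_change_inv_fun y) = y.
Proof. by case: y => [[a e] ae]; apply: sig_eq. Qed.

Definition dp_base_change_iso : sIso (dp p' s) (dp p u) :=
  @SIso _ _ (SMap dp_base_change_nat) (SMap dp_base_change_inv_nat)
        dp_base_change_funK dp_base_change_inv_funK.

End DpIso.

Lemma base_change_weak_homology_fibration :
  weak_homology_fibration p -> weak_homology_fibration p'.
Proof.
move=> Wp n s m t.
have fts : smap f (act t s) = act t (smap f s) by rewrite smap_nat.
apply: (homology_iso_transfer (h := dp_map p (smap f s) t)
          (a := dp_base_change_iso fts) (b := dp_base_change_iso (erefl (smap f s)))).
- by move=> k x; apply: sig_eq.
- exact: Wp.
Qed.

End BaseChange.

Theorem proposition1p3 (E B B' : sSet) (p : sMap E B) (f : sMap B' B) :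
  weak_homology_fibration p -> kan_fibration f ->
  weak_homology_fibration (pb_fst f p).
Proof. by move=> Wp _; exact: base_change_weak_homology_fibration. Qed.
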